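(* (a) If $\mathbf s$ and $\mathbf s'$ are two different infinite supernatural numbers, then the ind-groups $\mathrm{GL}(\mathbf s)$ and $\mathrm{GL}(\mathbf s')$ are not isomorphic, and $\mathrm{SL}(\mathbf s)$ and $\mathrm{SL}(\mathbf s')$ are not isomorphic. (b) If $\mathbf s$ is an infinite supernatural number, then $\mathrm{GL}(\mathbf s)$ is not isomorphic to $\mathrm{GL}(\infty)$, and $\mathrm{SL}(\mathbf s)$ is not isomorphic to $\mathrm{SL}(\infty)$.
   Context: A supernatural number is a formal product $\mathbf s=\prod_{p\in\mathcal P}p^{\alpha_p}$ over a set $\mathcal P$ of primes with $\alpha_p\in\mathbb Z_{>0}\cup\{\infty\}$; it is infinite if some $\alpha_p=\infty$ or $\mathcal P$ is infinite. $\mathcal D(\mathbf s)$ is the set of its finite positive divisors. For positive integers $s\mid s'$, $\delta_{s,s'}:\mathrm{GL}(s)\to\mathrm{GL}(s')$ sends $x$ to $\mathrm{diag}(x,\dots,x)$ ($s'/s$ blocks). $\mathrm{GL}(\mathbf s)$ (resp. $\mathrm{SL}(\mathbf s)$) is the ind-group $\varinjlim_{s\in\mathcal D(\mathbf s)}\mathrm{GL}(s)$ (resp. $\varinjlim\mathrm{SL}(s)$) along the maps $\delta_{s,s'}$. $\mathrm{GL}(\infty)$ (resp. $\mathrm{SL}(\infty)$) is the ind-group $\varinjlim\mathrm{GL}(n)$ (resp. $\varinjlim\mathrm{SL}(n)$) along the standard embeddings $x\mapsto\begin{pmatrix}x&0\\0&1\end{pmatrix}$. Isomorphisms are isomorphisms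 of ind-groups. *)

From HB Require Import structures.
From mathcomp Require Import all_boot all_order all_algebra.
From mathcomp Require Import mpoly.
Set Implicit Arguments. Unset Strict Implicit. Unset Printing Implicit Defensive.
Import GRing.Theory.
Local Open Scope ring_scope.

(* exponent function on primes: [None] = infinity, [Some k] = exponent k
   ([Some 0] means the prime does not occur). Non-primes get exponent 0. *)
Record supernat := Supernat {
  snat_exp : nat -> option nat;
  snat_exp_nonprime : forall p, ~~ prime p -> snat_exp p = Some 0%N }.

Definition snat_infinite (s : supernat) : Prop :=
  (exists p, prime p /\ snat_exp s p = None) \/
  ~ (exists N, forall p, (N <= p)%N -> snat_exp s p = Some 0%N).

Definition snat_divisor (s : supernat) (n : nat) : Prop :=
  (0 < n)%N /\ forall p, prime p ->
    if snat_exp s p is Some k then (logn p n <= k)%N else true.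

Record dsys (F : fieldType) := DSys {
  ds_idx : nat -> Prop;                       (* allowed sizes *)
  ds_le : nat -> nat -> Prop;                 (* when an embedding m -> n exists *)
  ds_emb : forall m n, 'M[F]_m -> 'M[F]_n;
  ds_grp : forall n, 'M[F]_n -> bool }.       (* the group GL(n) / SL(n) in 'M_n *)

Arguments ds_emb {F} d m n _.
Arguments ds_grp {F} d {n} _.
Arguments ds_idx {F} d _.
Arguments ds_le {F} d _ _.

(* delta_{m,n}: A |-> diag(A,...,A) (n/m blocks) *)
Definition delta_emb (F : fieldType) (m n : nat) (A : 'M[F]_m) : 'M[F]_n :=
  \matrix_(i < n, j < n)
    \sum_(k < m) \sum_(l < m)
      A k l *+ [&& (i %% m == k)%N, (j %% m == l)%N & (i %/ m == j %/ m)%N].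

(* standard embedding x |-> [[x,0],[0,1]] *)
Definition std_emb (F : fieldType) (m n : nat) (A : 'M[F]_m) : 'M[F]_n :=
  \matrix_(i < n, j < n)
    ((\sum_(k < m) \sum_(l < m) A k l *+ ((i == k :> nat) && (j == l :> nat)))
     + ((m <= i)%N && (i == j :> nat))%:R).

Definition GLpred (F : fieldType) n (A : 'M[F]_n) : bool := A \in unitmx.
Definition SLpred (F : fieldType) n (A : 'M[F]_n) : bool := \det A == 1.

Definition GLs (F : fieldType) (s : supernat) : dsys F :=
  DSys (snat_divisor s) (fun m n => (m %| n)%N) (@delta_emb F) (@GLpred F).
Definition SLs (F : fieldType) (s : supernat) : dsys F :=
  DSys (snat_divisor s) (fun m n => (m %| n)%N) (@delta_emb F) (@SLpred F).
Definition GLinf (F : fieldType) : dsys F :=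
  DSys (fun n => (0 < n)%N) (fun m n => (m <= n)%N) (@std_emb F) (@GLpred F).
Definition SLinf (F : fieldType) : dsys F :=
  DSys (fun n => (0 < n)%N) (fun m n => (m <= n)%N) (@std_emb F) (@SLpred F).

(* equality in the direct limit of the classes of (m,A) and (n,B) *)
Definition ds_eqv (F : fieldType) (X : dsys F) m (A : 'M[F]_m) n (B : 'M[F]_n) :=
  exists k, [/\ ds_idx X k, ds_le X m k, ds_le X n k &
                ds_emb X m k A = ds_emb X n k B].

(* f : 'M_n -> 'M_m is a morphism of varieties on the subvariety {A | P A}
   of GL(n): each entry is a regular function, i.e. a polynomial in the
   matrix entries divided by a power of the determinant. *)
Definition regular_on (F : fieldType) n m (P : 'M[F]_n -> bool)
    (f : 'M[F]_n -> 'M[F]_m) : Prop :=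
  exists (e : nat) (Q : 'I_m -> 'I_m -> {mpoly F[n * n]}),
    forall A, P A -> forall i j,
      f A i j = (Q i j).@[fun l => mxvec A 0 l] / (\det A) ^+ e.

(* morphism of ind-groups X -> Y given on the filtration pieces:
   X_n is sent into Y_(t n) by a morphism of varieties, compatibly with the
   embeddings, and multiplicatively. *)
Definition is_ind_hom (F : fieldType) (X Y : dsys F) (t : nat -> nat)
    (f : forall n, 'M[F]_n -> 'M[F]_(t n)) : Prop :=
  forall n, ds_idx X n ->
  [/\ ds_idx Y (t n),
      forall A, ds_grp X A -> ds_grp Y (f n A),
      regular_on (@ds_grp F X n) (f n),
      forall A B, ds_grp X A -> ds_grp X B -> f n (A *m B) = f n A *m f n B &
      forall n' (A : 'M[F]_n), ds_idx X n' -> ds_le X n n' -> ds_grp X A ->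
        ds_eqv Y (f n' (ds_emb X n n' A)) (f n A)].

Definition ind_iso (F : fieldType) (X Y : dsys F) : Prop :=
  exists (t : nat -> nat) (f : forall n, 'M[F]_n -> 'M[F]_(t n))
         (t' : nat -> nat) (g : forall n, 'M[F]_n -> 'M[F]_(t' n)),
  [/\ is_ind_hom X Y f, is_ind_hom Y X g,
      (forall n (A : 'M[F]_n), ds_idx X n -> ds_grp X A ->
          ds_eqv X (g (t n) (f n A)) A) &
      (forall n (B : 'M[F]_n), ds_idx Y n -> ds_grp Y B ->
          ds_eqv Y (f (t' n) (g n B)) B)].

From mathcomp Require Import all_boot all_order all_algebra.
From mathcomp Require Import perm cyclic separable cyclotomic.
From Stdlib Require Import Classical_Prop FunctionalExtensionality ProofIrrelevance.
Set Implicit Arguments. Unset Strict Implicit. Unset Printing Implicit Defensive.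
Import GRing.Theory.
Local Open Scope ring_scope.

(* In GL(s) and SL(s), a scalar c*1_n with c a primitive n-th root of unity,
   n in D(s), is central in the whole ind-group: the block-diagonal embeddings
   fix scalars.  An isomorphism f (with inverse g) sends it to an element
   commuting with every transvection of its level, hence to a scalar a*1_N
   with N in D(s').  Moreover det (a*1_N) = 1: trivially for SL, and for GL
   because c*1_n = P D P^-1 D^-1 with P the cyclic shift and
   D = diag(1, c, ..., c^(n-1)).  So a^N = 1, hence c^N = 1 as f is injective,
   i.e. n | N and n lies in D(s').  By symmetry D(s) = D(s'), so s = s'.
   In GL(oo) and SL(oo), a central element of level N becomes, after the
   embedding x |-> diag(x, 1), a scalar with a 1 in the corner, hence it is 1;
   thus f would kill the nontrivial central scalar c*1_p, p a prime dividing s. *)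

Lemma sum_ord_pick (V : nmodType) m (G : 'I_m.+1 -> V) x :
  \sum_(k < m.+1) G k *+ (x == k :> nat) = if (x < m.+1)%N then G (inord x) else 0.
Proof.
case: ltnP => [ltxm | lemx].
  rewrite (bigD1 (inord x)) //= inordK // eqxx big1 ?addr0 // => k.
  by rewrite -val_eqE /= inordK // eq_sym => /negPf ->.
by apply: big1 => k _; rewrite gtn_eqF // (leq_trans (ltn_ord k)).
Qed.

Section Embeddings.
Variable F : fieldType.

Lemma sum_mx_pick m (A : 'M[F]_m.+1) (x y : nat) (b : bool) :
  \sum_(k < m.+1) \sum_(l < m.+1) A k l *+ [&& x == k, y == l & b] =
  if [&& x < m.+1, y < m.+1 & b]%N then A (inord x) (inord y) else 0.
Proof.
under eq_bigr do under eq_bigr do rewrite andbCA -mulnb mulrnA.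
under eq_bigr do rewrite sumrMnl sum_ord_pick -mulnb mulrnA.
rewrite sumrMnl sum_ord_pick.
by case: (x < m.+1)%N; case: (y < m.+1)%N; case: b; rewrite /= ?mulr0n ?mul0rn.
Qed.

Lemma delta_embE m n (A : 'M[F]_m.+1) (i j : 'I_n) :
  delta_emb n A i j =
  if (i %/ m.+1 == j %/ m.+1)%N then A (inord (i %% m.+1)) (inord (j %% m.+1)) else 0.
Proof. by rewrite mxE sum_mx_pick !ltn_mod. Qed.

Lemma std_embE m n (A : 'M[F]_m.+1) (i j : 'I_n) :
  std_emb n A i j =
  if (i < m.+1)%N && (j < m.+1)%N then A (inord i) (inord j) else (i == j :> nat)%:R.
Proof.
rewrite mxE.
under eq_bigr do under eq_bigr do rewrite -[_ && _]andbT -andbA.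
rewrite sum_mx_pick andbT.
case: ltnP => [ltim|leim]; case: ltnP => [ltjm|lejm] /=; rewrite ?add0r ?addr0 //.
by rewrite ltn_eqF // (leq_trans ltim lejm).
Qed.

Lemma mx00_eq (A B : 'M[F]_0) : A = B.
Proof. by rewrite [A]flatmx0 [B]flatmx0. Qed.

Lemma delta_emb_block m q (A : 'M[F]_m.+1) :
  delta_emb (m.+1 + q * m.+1) A = block_mx A 0 0 (delta_emb (q * m.+1) A).
Proof.
apply/matrixP => i j; rewrite delta_embE.
have divD k : ((m.+1 + k) %/ m.+1 = (k %/ m.+1).+1)%N.
  by rewrite -{1}[m.+1]mul1n divnMDl.
case: (split_ordP i) => {}i ->; case: (split_ordP j) => {}j ->.
- by rewrite block_mxEul /= !divn_small // !modn_small // !inord_val eqxx.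
- by rewrite block_mxEur mxE /= divD (divn_small (ltn_ord i)).
- by rewrite block_mxEdl mxE /= divD (divn_small (ltn_ord j)).
- by rewrite block_mxEdr delta_embE /= !divD eqSS !modnDl.
Qed.

Lemma delta_emb_mul m n (A B : 'M[F]_m) : (m %| n)%N ->
  delta_emb n (A *m B) = delta_emb n A *m delta_emb n B.
Proof.
case: m A B => [|m] A B; first by rewrite dvd0n => /eqP ->; apply: mx00_eq.
case/dvdnP=> q ->; elim: q => [|q IH]; first exact: mx00_eq.
by rewrite mulSn !delta_emb_block mulmx_block IH !mulmx0 !mul0mx !addr0 !add0r.
Qed.

Lemma delta_emb_id m (A : 'M[F]_m) : delta_emb m A = A.
Proof.
case: m A => [|m] A; first exact: mx00_eq.
apply/matrixP => i j.
by rewrite delta_embE !divn_small // eqxx !modn_small // !inord_val.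
Qed.

Lemma delta_emb_inj m n : (0 < n)%N -> (m %| n)%N ->
  injective (delta_emb n : 'M[F]_m -> 'M[F]_n).
Proof.
case: m => [|m] n_gt0; first by rewrite dvd0n => /eqP n0; rewrite n0 in n_gt0.
case/dvdnP=> [[|q] n_def] A B; first by rewrite n_def in n_gt0.
by rewrite n_def mulSn !delta_emb_block => /eq_block_mx[].
Qed.

Lemma det_delta_emb m n (A : 'M[F]_m) : (m %| n)%N ->
  \det (delta_emb n A) = \det A ^+ (n %/ m).
Proof.
case: m A => [|m] A; first by rewrite dvd0n => /eqP ->; rewrite !det_mx00.
case/dvdnP=> q ->; rewrite mulnK //; elim: q => [|q IH]; first by rewrite det_mx00.
by rewrite mulSn delta_emb_block det_ublock IH exprS.
Qed.

Lemma delta_emb_scalar m n (a : F) : (m %| n)%N ->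
  delta_emb n (a%:M : 'M[F]_m) = a%:M.
Proof.
case: m => [|m]; first by rewrite dvd0n => /eqP ->; apply: mx00_eq.
case/dvdnP=> q ->; elim: q => [|q IH]; first exact: mx00_eq.
by rewrite mulSn delta_emb_block IH -scalar_mx_block.
Qed.

Lemma delta_emb_comp m k n (A : 'M[F]_m) : (0 < k)%N -> (m %| k)%N ->
  delta_emb n (delta_emb k A) = delta_emb n A.
Proof.
case: k => // k _; case: m A => [|m] A; first by rewrite dvd0n.
move=> dvd_mk; apply/matrixP => i j.
have same_block x y : ((x %/ k.+1 == y %/ k.+1) && ((x %% k.+1) %/ m.+1 == (y %% k.+1) %/ m.+1))%N
    = (x %/ m.+1 == y %/ m.+1)%N.
  case/dvdnP: dvd_mk => r ->.
  rewrite -!modn_divl mulnC !divnMA.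
  apply/idP/eqP => [/andP[/eqP qE /eqP rE]|->]; last by rewrite !eqxx.
  by rewrite (divn_eq (x %/ m.+1) r) qE rE -divn_eq.
rewrite delta_embE [RHS]delta_embE -same_block.
case: ifP => //= _; rewrite delta_embE !inordK ?ltn_mod //.
by rewrite !modn_dvdm.
Qed.

Lemma std_emb_block m r (A : 'M[F]_m.+1) :
  std_emb (m.+1 + r) A = block_mx A 0 0 1%:M.
Proof.
apply/matrixP => i j; rewrite std_embE.
case: (split_ordP i) => {}i ->; case: (split_ordP j) => {}j ->.
- by rewrite block_mxEul /= !inord_val.
- by rewrite block_mxEur mxE /= ltn_eqF // ltn_addr.
- by rewrite block_mxEdl mxE /= gtn_eqF // ltn_addr.
- by rewrite block_mxEdr mxE /= eqn_add2l.
Qed.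

Lemma std_emb_id m (A : 'M[F]_m.+1) : std_emb m.+1 A = A.
Proof. by apply/matrixP => i j; rewrite std_embE !ltn_ord !inord_val. Qed.

Lemma std_emb_comp m k n (A : 'M[F]_m.+1) : (m < k)%N ->
  std_emb n (std_emb k A) = std_emb n A.
Proof.
case: k => // k le_mk; apply/matrixP => i j; rewrite !std_embE.
case: ifP => [/andP[ltik ltjk] | not_lt_k]; first by rewrite !inordK.
case: ifP => // /andP[ltim ltjm]; move/negP: not_lt_k; case.
by rewrite !(leq_trans _ le_mk).
Qed.

Lemma std_emb_mul m n (A B : 'M[F]_m.+1) : (m < n)%N ->
  std_emb n (A *m B) = std_emb n A *m std_emb n B.
Proof.
move/subnKC <-.
by rewrite !std_emb_block mulmx_block !mulmx0 !mul0mx !addr0 !add0r mulmx1.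
Qed.

Lemma std_emb_inj m n : (m < n)%N -> injective (std_emb n : 'M[F]_m.+1 -> 'M[F]_n).
Proof. by move/subnKC <- => A B; rewrite !std_emb_block => /eq_block_mx[]. Qed.

Lemma std_emb1 m n : (m < n)%N -> std_emb n (1%:M : 'M[F]_m.+1) = 1%:M.
Proof. by move/subnKC <-; rewrite std_emb_block -scalar_mx_block. Qed.

Lemma std_emb_scalar_eq1 n (W : 'M[F]_n) : (0 < n)%N ->
  is_scalar_mx (std_emb n.+1 W) -> W = 1%:M.
Proof.
case: n W => // n W _ /is_scalar_mxP[a W_a].
have a1 : 1 = a.
  by move/matrixP/(_ ord_max ord_max): W_a; rewrite std_embE mxE ltnn !eqxx /= mulr1n.
apply: (@std_emb_inj n n.+2 (ltnW (ltnSn _))).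
by rewrite W_a -a1 std_emb1.
Qed.

End Embeddings.

Definition transvection (R : nzRingType) n (i j : 'I_n) : 'M[R]_n :=
  1%:M + delta_mx i j.

Section MatrixFacts.
Variable F : fieldType.

Lemma det_transvection n (i j : 'I_n) : i != j -> \det (transvection F i j) = 1.
Proof.
wlog lt_ji : i j / (j < i)%N => [IH | ] neq_ij.
  case: (ltngtP i j) => [lt_ij|lt_ji|/val_inj eq_ij]; last by rewrite eq_ij eqxx in neq_ij.
  - by rewrite -det_tr linearD /= trmx1 trmx_delta IH // eq_sym.
  - exact: IH.
rewrite det_trig.
  apply: big1 => k _; rewrite !mxE eqxx.
  by have [->|_] := eqVneq k i; rewrite ?(negPf neq_ij) addr0.
apply/is_trig_mxP => a b lt_ab; rewrite !mxE.
have [eq_ab|_] := eqVneq a b; first by rewrite eq_ab ltnn in lt_ab.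
have [eq_ai|_] := eqVneq a i; have [eq_bj|_] := eqVneq b j; rewrite ?addr0 //.
by move: lt_ab; rewrite eq_ai eq_bj ltnNge ltnW.
Qed.

Lemma mulmx_deltaE m n p (A : 'M[F]_(m, n)) (i : 'I_n) (j : 'I_p) a b :
  (A *m delta_mx i j) a b = A a i * (b == j)%:R.
Proof.
rewrite mxE (bigD1 i) //= mxE eqxx /= big1 ?addr0 // => k /negPf neq_ki.
by rewrite mxE neq_ki mulr0.
Qed.

Lemma delta_mulmxE m n p (A : 'M[F]_(n, p)) (i : 'I_m) (j : 'I_n) a b :
  (delta_mx i j *m A) a b = (a == i)%:R * A j b.
Proof.
rewrite mxE (bigD1 j) //= mxE eqxx andbT big1 ?addr0 // => k /negPf neq_kj.
by rewrite mxE neq_kj andbF mul0r.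
Qed.

Lemma comm_transvections_scalar n (W : 'M[F]_n) :
  (forall i j : 'I_n, i != j -> comm_mx W (transvection F i j)) -> is_scalar_mx W.
Proof.
case: n W => [|n] W commW; first by rewrite [W]flatmx0 mx0_is_scalar.
have comm_delta i j a b : i != j -> W a i * (b == j)%:R = (a == i)%:R * W j b.
  move/commW; rewrite /comm_mx /transvection mulmxDr mulmxDl mulmx1 mul1mx.
  by move/addrI/matrixP/(_ a b); rewrite mulmx_deltaE delta_mulmxE.
apply/is_scalar_mxP; exists (W 0 0); apply/matrixP => a b; rewrite mxE.
have [<-|neq_ab] := eqVneq a b.
  have [->|neq_a0] := eqVneq a 0; first by rewrite mulr1n.
  by move: (comm_delta a 0 a 0 neq_a0); rewrite !eqxx mulr1 mul1r mulr1n.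
have := comm_delta b a a a; rewrite eqxx (negPf neq_ab) mulr1 mul0r mulr0n.
by apply; rewrite eq_sym.
Qed.

Lemma root_scalar_commutator n (c : F) : (0 < n)%N -> c ^+ n = 1 ->
  exists P D : 'M[F]_n, [/\ P \in unitmx, D \in unitmx & P *m D = c%:M *m (D *m P)].
Proof.
move=> n_gt0 cn1; have c_neq0 : c != 0 by rewrite -unitfE -(unitrX_pos _ n_gt0) cn1 unitr1.
exists (perm_mx (perm (@ordS_inj n))), (diag_mx (\row_(i < n) c ^+ i)); split.
- exact: unitmx_perm.
- rewrite unitmxE det_diag unitfE; apply/prodf_neq0 => i _; rewrite mxE; exact: expf_neq0.
rewrite mul_scalar_mx mul_diag_mx -row_permE; apply/matrixP => i j; rewrite !mxE permE /=.
case: (ordS i == j); last by rewrite mulr0n !mulr0.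
by rewrite mulr1n mulr1 expr_mod // exprS.
Qed.

Lemma det_morph_root_scalar n N (f : 'M[F]_n -> 'M[F]_N) (c : F) :
    (0 < n)%N -> c ^+ n = 1 ->
    {in unitmx &, {morph f : A B / A *m B}} -> {in unitmx, forall A, f A \in unitmx} ->
  \det (f c%:M) = 1.
Proof.
move=> n_gt0 cn1 fM f_unit; have [P [D [P_unit D_unit PD]]] := root_scalar_commutator n_gt0 cn1.
have c_unit : (c%:M : 'M_n) \in unitmx by rewrite unitmxE det_scalar cn1 unitr1.
have /(congr1 determinant) := congr1 f PD.
have fPD_unit : \det (f P) * \det (f D) \is a GRing.unit.
  by rewrite unitrM -!unitmxE !f_unit.
rewrite !fM ?unitmx_mul ?P_unit ?D_unit // !det_mulmx [\det (f D) * _]mulrC.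
by rewrite -{1}[_ * _]mul1r => /(mulIr fPD_unit) <-.
Qed.

End MatrixFacts.

Lemma prim_root_neq1 (R : idomainType) n (z : R) : (1 < n)%N -> n.-primitive_root z -> z != 1.
Proof.
move=> n_gt1 z_prim; apply: contraTneq n_gt1 => z1.
by rewrite -leqNgt dvdn_leq // (prim_order_dvd z_prim) expr1 z1.
Qed.

Lemma closed_prim_root_exists (F : closedFieldType) n :
  (0 < n)%N -> n%:R != 0 :> F -> exists z : F, n.-primitive_root z.
Proof.
move=> n_gt0 n_neq0; have [r Xn1_def] := closed_field_poly_normal ('X^n - 1 : {poly F}).
rewrite (monicP (monicXnsubC 1 n_gt0)) scale1r in Xn1_def.
have r_roots : all n.-unity_root r by apply/allP => z; rewrite -root_prod_XsubC -Xn1_def.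
have r_uniq : uniq r by rewrite -separable_prod_XsubC -Xn1_def separable_Xn_sub_1.
have r_size : (n <= size r)%N.
  by have := size_prod_XsubC r id; rewrite -Xn1_def size_XnsubC // => -[->].
by have /hasP[z _] := has_prim_root n_gt0 r_roots r_uniq r_size; exists z.
Qed.

Lemma closed_char0_prim_root (F : closedFieldType) :
  [pchar F] =i pred0 -> forall n, (0 < n)%N -> exists z : F, n.-primitive_root z.
Proof.
move=> /pcharf0P F_char0 n n_gt0; apply: closed_prim_root_exists => //.
by rewrite F_char0 -lt0n.
Qed.

Lemma snat_divisor_lcm s a b :
  snat_divisor s a -> snat_divisor s b -> snat_divisor s (lcmn a b).
Proof.
case=> a_gt0 a_exp [b_gt0 b_exp]; split => [|p p_pr]; first by rewrite lcmn_gt0 a_gt0.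
have := a_exp p p_pr; have := b_exp p p_pr.
by case: (snat_exp s p) => // k; rewrite logn_lcm // geq_max => -> ->.
Qed.

Lemma snat_divisor_dvd s a b :
  (0 < a)%N -> (a %| b)%N -> snat_divisor s b -> snat_divisor s a.
Proof.
move=> a_gt0 dvd_ab [b_gt0 b_exp]; split => // p p_pr; have := b_exp p p_pr.
by case: (snat_exp s p) => // k; apply: leq_trans; apply: dvdn_leq_log.
Qed.

(* [odflt j] reads an infinite exponent ([None]) as no constraint on [j]. *)
Lemma snat_divisor_pfactor s p j : prime p ->
  snat_divisor s (p ^ j) <-> (j <= odflt j (snat_exp s p))%N.
Proof.
move=> p_pr; split => [[_ /(_ p p_pr)] | le_j].
  by rewrite pfactorK //; case: (snat_exp s p).
split => [|q q_pr]; first by rewrite expn_gt0 prime_gt0.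
rewrite lognX logn_prime //; have [->|_] := eqVneq q p.
  by rewrite muln1; case: (snat_exp s p) le_j.
by rewrite muln0; case: (snat_exp s q).
Qed.

Lemma supernat_ext s s' : (forall p, prime p -> snat_exp s p = snat_exp s' p) -> s = s'.
Proof.
case: s s' => e e_np [e' e'_np] /= eq_e.
have eq_ee' : e = e'.
  apply: functional_extensionality => p.
  by case: (boolP (prime p)) => [/eq_e // | np]; rewrite e_np ?e'_np.
by subst e'; congr Supernat; apply: proof_irrelevance.
Qed.

Lemma eq_supernat s s' : (forall n, snat_divisor s n <-> snat_divisor s' n) -> s = s'.
Proof.
move=> eq_div; apply: supernat_ext => p p_pr.
have le_exp j : (j <= odflt j (snat_exp s p))%N = (j <= odflt j (snat_exp s' p))%N.
  by apply/idP/idP => /(snat_divisor_pfactor _ _ p_pr) /eq_div /snat_divisor_pfactor; apply.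
case: (snat_exp s p) (snat_exp s' p) le_exp => [k|] [k'|] //= le_exp.
- by congr Some; apply/eqP; rewrite eqn_leq le_exp leqnn -le_exp leqnn.
- by have := le_exp k.+1; rewrite ltnn leqnn.
- by have := le_exp k'.+1; rewrite ltnn leqnn.
Qed.

Lemma snat_infinite_prime_divisor s :
  snat_infinite s -> exists2 p, prime p & snat_divisor s p.
Proof.
move=> s_inf.
have [[p p_pr exp_p] | no_p] := classic (exists2 p, prime p & snat_exp s p <> Some 0%N).
  exists p => //; rewrite -[p]expn1; apply/snat_divisor_pfactor => //.
  by case: (snat_exp s p) exp_p => [[|k]|].
case: s_inf => [[p [p_pr exp_p]] | s_nfin].
  by exists p => //; rewrite -[p]expn1; apply/snat_divisor_pfactor => //; rewrite exp_p.
exfalso; apply: s_nfin; exists 0%N => p _.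
case: (boolP (prime p)) => [p_pr | /snat_exp_nonprime //].
by apply: NNPP => exp_p; apply: no_p; exists p.
Qed.

Section IndSystems.
Variable F : fieldType.
Implicit Types X Y : dsys F.

Definition ind_system X : Prop :=
  [/\ forall a b, ds_idx X a -> ds_idx X b ->
        exists2 k, ds_idx X k & ds_le X a k /\ ds_le X b k,
      forall a (A : 'M[F]_a), ds_idx X a -> ds_le X a a /\ ds_emb X a a A = A,
      forall a b c (A : 'M[F]_a), ds_idx X a -> ds_idx X b -> ds_idx X c ->
        ds_le X a b -> ds_le X b c ->
        ds_le X a c /\ ds_emb X b c (ds_emb X a b A) = ds_emb X a c A,
      forall a b (A B : 'M[F]_a), ds_idx X a -> ds_idx X b -> ds_le X a b ->
        ds_emb X a b (A *m B) = ds_emb X a b A *m ds_emb X a b B &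
      forall a b, ds_idx X a -> ds_idx X b -> ds_le X a b ->
        injective (ds_emb X a b)].

Definition mx_group_pred (P : forall n, 'M[F]_n -> bool) : Prop :=
  forall n, [/\ P n 1%:M, {in P n &, forall A B, P n (A *m B)} &
                {subset P n <= unitmx}].

Definition emb_group_closed X : Prop :=
  forall a b (A : 'M[F]_a), ds_idx X a -> ds_idx X b -> ds_le X a b ->
    ds_grp X A -> ds_grp X (ds_emb X a b A).

Definition ds_central X n (z : 'M[F]_n) : Prop :=
  forall k (U : 'M[F]_k), ds_idx X k -> ds_le X n k -> comm_mx (ds_emb X n k z) U.

Section Equivalence.
Variable X : dsys F.
Hypothesis X_ind : ind_system X.

Lemma ds_eqv_refl a (A : 'M[F]_a) : ds_idx X a -> ds_eqv X A A.
Proof. by case: X_ind => _ X_refl _ _ _ idx_a; have [] := X_refl a A idx_a; exists a. Qed.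

Lemma ds_eqv_sym a b (A : 'M[F]_a) (B : 'M[F]_b) : ds_eqv X A B -> ds_eqv X B A.
Proof. by case=> k [] *; exists k. Qed.

Lemma ds_eqv_emb a b (A : 'M[F]_a) : ds_idx X a -> ds_idx X b -> ds_le X a b ->
  ds_eqv X (ds_emb X a b A) A.
Proof.
case: X_ind => _ X_refl _ _ _ idx_a idx_b le_ab.
by have [le_bb emb_bb] := X_refl b (ds_emb X a b A) idx_b; exists b.
Qed.

Lemma ds_emb_eq_lift a b k k' (A : 'M[F]_a) (B : 'M[F]_b) :
    ds_idx X a -> ds_idx X b -> ds_idx X k -> ds_idx X k' ->
    ds_le X a k -> ds_le X b k -> ds_le X k k' ->
    ds_emb X a k A = ds_emb X b k B ->
  [/\ ds_le X a k', ds_le X b k' & ds_emb X a k' A = ds_emb X b k' B].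
Proof.
case: X_ind => _ _ X_trans _ _ idx_a idx_b idx_k idx_k' le_ak le_bk le_kk' eqAB.
have [le_ak' <-] := X_trans _ _ _ A idx_a idx_k idx_k' le_ak le_kk'.
have [le_bk' <-] := X_trans _ _ _ B idx_b idx_k idx_k' le_bk le_kk'.
by rewrite eqAB.
Qed.

Lemma ds_eqv_trans a b c (A : 'M[F]_a) (B : 'M[F]_b) (C : 'M[F]_c) :
    ds_idx X a -> ds_idx X b -> ds_idx X c ->
  ds_eqv X A B -> ds_eqv X B C -> ds_eqv X A C.
Proof.
move=> idx_a idx_b idx_c [k1 [idx_k1 le_ak1 le_bk1 eqAB]] [k2 [idx_k2 le_bk2 le_ck2 eqBC]].
case: (X_ind) => X_dir _ _ _ _; have [k idx_k [le_k1k le_k2k]] := X_dir _ _ idx_k1 idx_k2.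
have [le_ak le_bk eqAB'] := ds_emb_eq_lift idx_a idx_b idx_k1 idx_k le_ak1 le_bk1 le_k1k eqAB.
have [_ le_ck eqBC'] := ds_emb_eq_lift idx_b idx_c idx_k2 idx_k le_bk2 le_ck2 le_k2k eqBC.
by exists k; split; rewrite // eqAB'.
Qed.

Lemma ds_eqv_comm a b (W1 W2 : 'M[F]_a) (U1 U2 : 'M[F]_b) :
    ds_idx X a -> ds_idx X b ->
  ds_eqv X W1 U1 -> ds_eqv X W2 U2 -> comm_mx U1 U2 -> comm_mx W1 W2.
Proof.
move=> idx_a idx_b [k1 [idx_k1 le_ak1 le_bk1 eq1]] [k2 [idx_k2 le_ak2 le_bk2 eq2]] commU.
case: (X_ind) => X_dir _ _ X_mul X_inj.
have [k idx_k [le_k1k le_k2k]] := X_dir _ _ idx_k1 idx_k2.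
have [le_ak le_bk eq1'] := ds_emb_eq_lift idx_a idx_b idx_k1 idx_k le_ak1 le_bk1 le_k1k eq1.
have [_ _ eq2'] := ds_emb_eq_lift idx_a idx_b idx_k2 idx_k le_ak2 le_bk2 le_k2k eq2.
apply: (X_inj _ _ idx_a idx_k le_ak).
by rewrite !X_mul // eq1' eq2' -!X_mul // commU.
Qed.

End Equivalence.

Lemma ind_hom1 X Y t (f : forall n, 'M[F]_n -> 'M[F]_(t n)) n :
    is_ind_hom X Y f -> mx_group_pred (@ds_grp F X) -> mx_group_pred (@ds_grp F Y) ->
    ds_idx X n ->
  f n 1%:M = 1%:M.
Proof.
move=> f_hom X_grp Y_grp idx_n; have [idx_tn f_grp _ f_mul _] := f_hom n idx_n.
have [grp1 _ _] := X_grp n; have [_ _ Y_unit] := Y_grp (t n).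
have f1_unit := Y_unit _ (f_grp _ grp1).
have f1_idem : f n 1%:M *m f n 1%:M = f n 1%:M by rewrite -f_mul // mulmx1.
by rewrite -[LHS](mulKmx f1_unit) f1_idem mulVmx.
Qed.

Section IsoTransfer.
Variables (X Y : dsys F) (t t' : nat -> nat).
Variables (f : forall n, 'M[F]_n -> 'M[F]_(t n)) (g : forall n, 'M[F]_n -> 'M[F]_(t' n)).
Arguments f : clear implicits.
Arguments g : clear implicits.
Hypotheses (X_ind : ind_system X) (Y_ind : ind_system Y).
Hypotheses (f_hom : is_ind_hom X Y f) (g_hom : is_ind_hom Y X g).
Hypothesis gf_id : forall n (A : 'M[F]_n), ds_idx X n -> ds_grp X A ->
  ds_eqv X (g (t n) (f n A)) A.
Hypothesis fg_id : forall n (B : 'M[F]_n), ds_idx Y n -> ds_grp Y B ->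
  ds_eqv Y (f (t' n) (g n B)) B.

Lemma ind_iso_central n (z : 'M[F]_n) :
    emb_group_closed X -> ds_idx X n -> ds_grp X z -> ds_central X z ->
  forall M (W C : 'M[F]_M), ds_idx Y M -> ds_grp Y C -> ds_eqv Y W (f n z) ->
  comm_mx W C.
Proof.
move=> X_emb idx_n z_grp z_central M W C idx_M C_grp eqv_W.
have [idx_L g_grp _ _ _] := g_hom idx_M; set L := t' M in idx_L g_grp *.
have u_grp := g_grp C C_grp; set u := g M C in u_grp *.
case: (X_ind) => X_dir _ _ _ _; have [K idx_K [le_nK le_LK]] := X_dir _ _ idx_n idx_L.
have [idx_tn _ _ _ f_compat_n] := f_hom idx_n.
have [idx_tL _ _ _ f_compat_L] := f_hom idx_L.
have [idx_tK _ _ f_mul_K _] := f_hom idx_K.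
apply: (ds_eqv_comm Y_ind idx_M idx_tK).
- apply: (ds_eqv_trans Y_ind idx_M idx_tn idx_tK eqv_W).
  exact/ds_eqv_sym/f_compat_n.
- apply: (ds_eqv_trans Y_ind idx_M idx_tL idx_tK (ds_eqv_sym (fg_id idx_M C_grp))).
  exact/ds_eqv_sym/f_compat_L.
by rewrite /comm_mx -!f_mul_K ?X_emb // z_central.
Qed.

Lemma ind_iso_kernel n (z : 'M[F]_n) :
    mx_group_pred (@ds_grp F X) -> mx_group_pred (@ds_grp F Y) ->
    ds_idx X n -> ds_grp X z -> f n z = 1%:M ->
  exists2 m, ds_idx X m & ds_eqv X (1%:M : 'M_m) z.
Proof.
move=> X_grp Y_grp idx_n z_grp fz1; have [idx_tn _ _ _ _] := f_hom idx_n.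
have [idx_m _ _ _ _] := g_hom idx_tn; exists (t' (t n)) => //.
by have := gf_id idx_n z_grp; rewrite fz1 (ind_hom1 g_hom Y_grp X_grp idx_tn).
Qed.

End IsoTransfer.

End IndSystems.

Lemma ind_iso_sym (F : fieldType) (X Y : dsys F) : ind_iso X Y -> ind_iso Y X.
Proof. by case=> t [f [t' [g [f_hom g_hom gf_id fg_id]]]]; exists t', g, t, f. Qed.

Section ConcreteSystems.
Variable F : fieldType.
Implicit Type P : forall n, 'M[F]_n -> bool.

Definition delta_sys P s : dsys F :=
  DSys (snat_divisor s) (fun m n => (m %| n)%N) (@delta_emb F) P.

Definition std_sys P : dsys F :=
  DSys (fun n => (0 < n)%N) (fun m n => (m <= n)%N) (@std_emb F) P.

Lemma delta_sys_ind P s : ind_system (delta_sys P s).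
Proof.
split => /=.
- move=> a b div_a div_b; exists (lcmn a b); first exact: snat_divisor_lcm.
  by rewrite dvdn_lcml dvdn_lcmr.
- by move=> a A _; rewrite dvdnn delta_emb_id.
- move=> a b c A _ [b_gt0 _] _ dvd_ab dvd_bc.
  by rewrite (dvdn_trans dvd_ab dvd_bc) delta_emb_comp.
- by move=> a b A B _ _; apply: delta_emb_mul.
- by move=> a b _ [b_gt0 _]; apply: delta_emb_inj.
Qed.

Lemma std_sys_ind P : ind_system (std_sys P).
Proof.
split => /=.
- move=> a b a_gt0 _; exists (maxn a b); first by rewrite leq_max a_gt0.
  by rewrite leq_maxl leq_maxr.
- by move=> [|a] A // _; rewrite leqnn std_emb_id.
- by move=> [|a] b c A // _ _ _ le_ab le_bc; rewrite (leq_trans le_ab le_bc) std_emb_comp.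
- by move=> [|a] b A B // _ _; apply: std_emb_mul.
- by move=> [|a] b // _ _; apply: std_emb_inj.
Qed.

Lemma delta_sys_central P s n (c : F) : ds_central (delta_sys P s) (c%:M : 'M_n).
Proof. by move=> k U _ /= dvd_nk; rewrite delta_emb_scalar //; apply: comm_scalar_mx. Qed.

Lemma delta_sys_eqv_scalar P s m n (a b : F) :
  ds_eqv (delta_sys P s) (a%:M : 'M_m) (b%:M : 'M_n) -> a = b.
Proof.
case=> -[|k] [[//= _ _] /= dvd_mk dvd_nk]; rewrite !delta_emb_scalar //.
by move/matrixP/(_ 0 0); rewrite !mxE eqxx !mulr1n.
Qed.

Lemma std_sys_eqv P n (W : 'M[F]_n) : (0 < n)%N ->
  ds_eqv (std_sys P) (std_emb n.+1 W) W.
Proof. by move=> n_gt0; apply: (ds_eqv_emb (std_sys_ind P)); rewrite /= ?leqnSn. Qed.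

End ConcreteSystems.

Section DeltaIso.
Variables (F : fieldType) (P : forall n, 'M[F]_n -> bool) (s : supernat) (Y : dsys F).
Variables (t t' : nat -> nat).
Variables (f : forall n, 'M[F]_n -> 'M[F]_(t n)) (g : forall n, 'M[F]_n -> 'M[F]_(t' n)).
Arguments f : clear implicits.
Arguments g : clear implicits.
Arguments P : clear implicits.
Local Notation X := (delta_sys P s).
Hypotheses (f_hom : is_ind_hom X Y f) (g_hom : is_ind_hom Y X g).
Hypothesis gf_id : forall n (A : 'M[F]_n), ds_idx X n -> ds_grp X A ->
  ds_eqv X (g (t n) (f n A)) A.
Hypothesis fg_id : forall n (B : 'M[F]_n), ds_idx Y n -> ds_grp Y B ->
  ds_eqv Y (f (t' n) (g n B)) B.
Hypotheses (P_group : mx_group_pred P) (P_delta : emb_group_closed X).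
Hypothesis P_root : forall n (c : F), c ^+ n = 1 -> P n c%:M.
Hypotheses (Y_ind : ind_system Y) (Y_group : mx_group_pred (@ds_grp F Y)).

Lemma hom_root_scalar_central n (c : F) : snat_divisor s n -> c ^+ n = 1 ->
  forall M (W C : 'M[F]_M), ds_idx Y M -> ds_grp Y C -> ds_eqv Y W (f n c%:M) ->
  comm_mx W C.
Proof.
move=> div_n cn1.
apply: (ind_iso_central (delta_sys_ind P s) Y_ind f_hom g_hom fg_id P_delta div_n).
  exact: P_root.
exact: delta_sys_central.
Qed.

Lemma hom_root_scalar_eq1 n (b : F) : snat_divisor s n -> b ^+ n = 1 ->
  f n b%:M = 1%:M -> b = 1.
Proof.
move=> div_n bn1 fb1.
have [m _ eqv_1b] := ind_iso_kernel f_hom g_hom gf_id P_group Y_group div_n (P_root bn1) fb1.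
exact/esym/(delta_sys_eqv_scalar eqv_1b).
Qed.

Lemma hom_root_scalar_exp n (c a : F) : snat_divisor s n -> c ^+ n = 1 ->
  f n c%:M = a%:M -> forall j, f n (c ^+ j)%:M = (a ^+ j)%:M.
Proof.
move=> div_n cn1 fca; have [_ _ _ f_mul _] := f_hom div_n.
have root_pow j : (c ^+ j) ^+ n = 1 by rewrite exprAC cn1 expr1n.
elim=> [|j IHj]; first by rewrite !expr0 (ind_hom1 f_hom P_group Y_group div_n).
have -> : (c ^+ j.+1)%:M = c%:M *m (c ^+ j)%:M :> 'M_n by rewrite exprS scalar_mxM.
have c_grp := P_root cn1; have cj_grp := P_root (root_pow j).
by rewrite f_mul // fca IHj -scalar_mxM -exprS.
Qed.

End DeltaIso.

Section DeltaIsoConsequences.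
Variables (F : fieldType) (P : forall n, 'M[F]_n -> bool).
Arguments P : clear implicits.
Hypotheses (P_group : mx_group_pred P) (P_delta : forall s, emb_group_closed (delta_sys P s)).
Hypothesis P_root : forall n (c : F), c ^+ n = 1 -> P n c%:M.
Hypothesis P_transvection : forall n (i j : 'I_n), i != j -> P n (transvection F i j).
Hypothesis P_root_det : forall n N (h : 'M[F]_n -> 'M[F]_N) (c : F),
  (0 < n)%N -> c ^+ n = 1 ->
  {in P n &, {morph h : A B / A *m B}} -> {in P n, forall A, P N (h A)} ->
  \det (h c%:M) = 1.

Lemma delta_iso_divisor s s' n (c : F) :
    ind_iso (delta_sys P s) (delta_sys P s') -> n.-primitive_root c ->
  snat_divisor s n -> snat_divisor s' n.
Proof.
case=> t [f [t' [g [f_hom g_hom gf_id fg_id]]]] c_prim div_n.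
have cn1 := prim_expr_order c_prim; have n_gt0 := prim_order_gt0 c_prim.
have [div_tn f_grp _ f_mul _] := f_hom n div_n.
have /is_scalar_mxP[a fca] : is_scalar_mx (f n c%:M).
  apply: comm_transvections_scalar => i j neq_ij.
  apply: (hom_root_scalar_central f_hom g_hom fg_id (@P_delta s) P_root (delta_sys_ind P s')
            div_n cn1 div_tn (P_transvection neq_ij)).
  by apply: (ds_eqv_refl (delta_sys_ind P s')).
have a_tn : a ^+ t n = 1 by rewrite -det_scalar -fca (P_root_det n_gt0 cn1 f_mul f_grp).
have c_tn : c ^+ t n = 1.
  apply: (hom_root_scalar_eq1 f_hom g_hom gf_id P_group P_root P_group div_n).
    by rewrite exprAC cn1 expr1n.
  by rewrite (hom_root_scalar_exp f_hom P_group P_root P_group div_n cn1 fca) a_tn.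
by apply: snat_divisor_dvd div_tn; rewrite // (prim_order_dvd c_prim) c_tn.
Qed.

Lemma delta_iso_eq s s' :
    (forall n, (0 < n)%N -> exists c : F, n.-primitive_root c) ->
  ind_iso (delta_sys P s) (delta_sys P s') -> s = s'.
Proof.
move=> prim_roots iso; apply: eq_supernat => n.
split=> div_n; have [c c_prim] := prim_roots n (proj1 div_n).
  exact: delta_iso_divisor iso c_prim div_n.
exact: delta_iso_divisor (ind_iso_sym iso) c_prim div_n.
Qed.

Lemma delta_std_not_iso (Q : forall n, 'M[F]_n -> bool) s n (c : F) :
    mx_group_pred Q -> (forall n (i j : 'I_n), i != j -> Q n (transvection F i j)) ->
    snat_divisor s n -> c ^+ n = 1 -> c != 1 ->
  ~ ind_iso (delta_sys P s) (std_sys Q).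
Proof.
move=> Q_group Q_transvection div_n cn1 /eqP c_neq1 [t [f [t' [g [f_hom g_hom gf_id fg_id]]]]].
apply: c_neq1 (hom_root_scalar_eq1 f_hom g_hom gf_id P_group P_root Q_group div_n cn1 _).
have [tn_gt0 _ _ _ _] := f_hom n div_n.
apply: (std_emb_scalar_eq1 tn_gt0); apply: comm_transvections_scalar => i j neq_ij.
apply: (hom_root_scalar_central f_hom g_hom fg_id (@P_delta s) P_root (std_sys_ind Q)
          div_n cn1 (ltn0Sn _) (Q_transvection _ _ _ neq_ij)).
exact: std_sys_eqv.
Qed.

End DeltaIsoConsequences.

Section GLandSL.
Variable F : fieldType.

Lemma SL_GL n (A : 'M[F]_n) : SLpred A -> GLpred A.
Proof. by rewrite /SLpred /GLpred unitmxE => /eqP->; apply: unitr1. Qed.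

Lemma GL_group : mx_group_pred (@GLpred F).
Proof. by move=> n; split=> [|A B|A] //; [apply: unitmx1 | rewrite /GLpred unitmx_mul => ->]. Qed.

Lemma SL_group : mx_group_pred (@SLpred F).
Proof.
move=> n; split=> [|A B|A]; rewrite /SLpred ?det1 //; last exact: SL_GL.
by rewrite det_mulmx => /eqP-> /eqP->; rewrite mulr1.
Qed.

Lemma GL_delta_closed s : emb_group_closed (GLs F s).
Proof. by move=> a b A _ _ /= dvd_ab; rewrite /GLpred !unitmxE det_delta_emb // => /unitrX. Qed.

Lemma SL_delta_closed s : emb_group_closed (SLs F s).
Proof.
by move=> a b A _ _ /= dvd_ab; rewrite /SLpred det_delta_emb // => /eqP->; rewrite expr1n.
Qed.

Lemma SL_root_scalar n (c : F) : c ^+ n = 1 -> SLpred (c%:M : 'M_n).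
Proof. by rewrite /SLpred det_scalar => ->. Qed.

Lemma GL_root_scalar n (c : F) : c ^+ n = 1 -> GLpred (c%:M : 'M_n).
Proof. by move/SL_root_scalar/SL_GL. Qed.

Lemma SL_transvection n (i j : 'I_n) : i != j -> SLpred (transvection F i j).
Proof. by move/det_transvection; rewrite /SLpred => ->. Qed.

Lemma GL_transvection n (i j : 'I_n) : i != j -> GLpred (transvection F i j).
Proof. by move/SL_transvection/SL_GL. Qed.

Lemma SL_root_scalar_det n N (h : 'M[F]_n -> 'M[F]_N) (c : F) :
    (0 < n)%N -> c ^+ n = 1 ->
    {in @SLpred F n &, {morph h : A B / A *m B}} -> {in @SLpred F n, forall A, SLpred (h A)} ->
  \det (h c%:M) = 1.
Proof. by move=> _ cn1 _ h_SL; apply/eqP/h_SL/SL_root_scalar. Qed.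

End GLandSL.

Local Close Scope ring_scope.
Unset Implicit Arguments.

Theorem proposition2p5 (F : closedFieldType) (hF : [pchar F]%R =i pred0) :
  (forall s s' : supernat, snat_infinite s -> snat_infinite s' -> s <> s' ->
     ~ ind_iso (GLs F s) (GLs F s') /\ ~ ind_iso (SLs F s) (SLs F s')) /\
  (forall s : supernat, snat_infinite s ->
     ~ ind_iso (GLs F s) (GLinf F) /\ ~ ind_iso (SLs F s) (SLinf F)).
Proof.
have prim_roots := closed_char0_prim_root hF.
split=> [s s' _ _ neq_ss' | s s_inf].
  split=> iso; apply: neq_ss'.
  - exact: (delta_iso_eq (@GL_group F) (@GL_delta_closed F) (@GL_root_scalar F)
              (@GL_transvection F) (@det_morph_root_scalar F) prim_roots iso).
  - exact: (delta_iso_eq (@SL_group F) (@SL_delta_closed F) (@SL_root_scalar F)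
              (@SL_transvection F) (@SL_root_scalar_det F) prim_roots iso).
have [p p_pr div_p] := snat_infinite_prime_divisor s_inf.
have [c c_prim] := prim_roots p (prime_gt0 p_pr).
have c_neq1 := prim_root_neq1 (prime_gt1 p_pr) c_prim.
have cp1 := prim_expr_order c_prim.
split.
- exact: (delta_std_not_iso (@GL_group F) (@GL_delta_closed F) (@GL_root_scalar F)
            (@GL_group F) (@GL_transvection F) div_p cp1 c_neq1).
- exact: (delta_std_not_iso (@SL_group F) (@SL_delta_closed F) (@SL_root_scalar F)
            (@SL_group F) (@SL_transvection F) div_p cp1 c_neq1).
Qed.
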